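(* Let $\mathcal{A}$ be a BST mergesort algorithm which sorts the permutation $\pi$ of $\{1,\dots,n\}$ using $\mathcal{A}(\pi)$ accesses. Then $\mathrm{OPT}_{\mathrm{BST}}(\pi)\in O(\mathcal{A}(\pi))$.
   Context: BST model: the keys $\{1,\dots,n\}$ are stored in a BST; an access sequence is served in order, each search starting with a pointer at the root and at each step moving the pointer to the parent or a child, or rotating the current node with its parent, each at unit cost; the search must visit its key. $\mathrm{OPT}_{\mathrm{BST}}(\pi)$ is the minimum cost of an offline BST algorithm (knowing the whole sequence in advance) serving $\pi$ as an access sequence. A top tree of a binary tree $T$ is a connected set of nodes containing the root. BST merge: given BSTs $T_A,T_B$ with disjoint keys, for some top trees $\tau_a$ of $T_A$, $\tau_b$ of $T_B$, it returns a BST $T$ on the union of keys such that for some top tree $\tau$ of $T$, $\tau=\tau_a\cup\tau_b$, the subtrees of $T$ hanging off $\tau$ are unchanged subtrees of $T_A$ or $T_B$, and $\tau$ contains the block boundaries (in the sorted merged order, a block is a maximal contiguous run of keys from the same input; its boundaries are its first and last keys). Number of accesses: $|\tau|$. BST mergesort: on input of size 1 returns it; otherwise splits the input sequence into two contiguous parts each of size at least 1, recursively BST-mergesorts each, and BST-merges the results. Number of accesses: the sum of accesses over all merges. *)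

From mathcomp Require Import all_boot.
Set Implicit Arguments. Unset Strict Implicit. Unset Printing Implicit Defensive.

Inductive tree := Leaf | Node of tree & nat & tree.

Fixpoint inorder (t : tree) : seq nat :=
  if t is Node l k r then inorder l ++ k :: inorder r else [::].

Definition is_bst (t : tree) : bool := sorted ltn (inorder t).

(* A pointer position is a path from the root: false = left, true = right. *)
Fixpoint subtree (t : tree) (p : seq bool) : tree :=
  match p, t with
  | [::], _ => t
  | b :: p', Node l _ r => subtree (if b then r else l) p'
  | _ :: _, Leaf => Leaf
  end.

Fixpoint replace (t : tree) (p : seq bool) (s : tree) : tree :=
  match p with
  | [::] => s
  | b :: p' =>
      match t with
      | Leaf => Leaf
      | Node l k r => if b then Node l k (replace r p' s) else Node (replace l p' s) k r
      end
  end.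

Definition key_at (t : tree) (p : seq bool) : option nat :=
  if subtree t p is Node _ k _ then Some k else None.

Definition rotate (b : bool) (s : tree) : option tree :=
  match b, s with
  | false, Node (Node a x c) y d => Some (Node a x (Node c y d))
  | true, Node a y (Node c x d) => Some (Node (Node a y c) x d)
  | _, _ => None
  end.

(* One unit-cost operation of the BST model on (tree, pointer). *)
Definition step (st st' : tree * seq bool) : Prop :=
  let: (t, p) := st in let: (t', p') := st' in
  (exists q b, p = rcons q b /\ t' = t /\ p' = q) \/
  (exists b, p' = rcons p b /\ t' = t /\ key_at t p' <> None) \/
  (* rotate the current node with its parent *)
  (exists q b s, p = rcons q b /\ rotate b (subtree t q) = Some s /\
                 t' = replace t q s /\ p' = q).

Inductive reach : tree * seq bool -> nat -> tree * seq bool -> Prop :=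
| reach_refl st : reach st 0 st
| reach_step st st1 c st' : step st st1 -> reach st1 c st' -> reach st c.+1 st'.

Definition search (t : tree) (x : nat) (c : nat) (t' : tree) : Prop :=
  exists t1 p1 c1 p2 c2,
    reach (t, [::]) c1 (t1, p1) /\ key_at t1 p1 = Some x /\
    reach (t1, p1) c2 (t', p2) /\ c = c1 + c2.

Inductive serve : tree -> seq nat -> nat -> Prop :=
| serve_nil t : serve t [::] 0
| serve_cons t x xs c1 t1 c2 :
    search t x c1 t1 -> serve t1 xs c2 -> serve t (x :: xs) (c1 + c2).

(* OPT_BST(pi) <= b : some offline BST algorithm (choosing the initial BST on
   keys {1..n} and all operations) serves pi at cost at most b. *)
Definition OPT_BST_le (n : nat) (pi : seq nat) (b : nat) : Prop :=
  exists (t0 : tree) (cost : nat),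
    inorder t0 = iota 1 n /\ serve t0 pi cost /\ cost <= b.

(* The node set of a top tree of t is represented by a predicate P on keys
   (nodes are identified with their keys); its nodes are the keys of t in P. *)
Fixpoint topc (P : pred nat) (t : tree) : bool :=
  if t is Node l k r then
    (if P k then topc P l && topc P r else all (predC P) (inorder t))
  else true.

(* connected, contains the root *)
Definition is_top (P : pred nat) (t : tree) : bool :=
  (if t is Node _ k _ then P k else false) && topc P t.

Fixpoint hanging (P : pred nat) (t : tree) : seq tree :=
  if t is Node l k r then
    (if P k then hanging P l ++ hanging P r else [:: t])
  else [::].

Definition is_subtree_of (s t : tree) : Prop := exists p, subtree t p = s.

(* block boundaries of the merged sorted sequence s w.r.t. the key set A:
   first and last key, and both keys at every change of origin *)
Definition boundaries_in (P : pred nat) (A : seq nat) (s : seq nat) : bool :=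
  (if s is x :: _ then P x else true) && (if s is x :: _ then P (last x s) else true) &&
  all (fun xy => ((xy.1 \in A) != (xy.2 \in A)) ==> (P xy.1 && P xy.2))
      (zip s (behead s)).

Fixpoint In_seq (x : tree) (s : seq tree) : Prop :=
  if s is y :: s' then y = x \/ In_seq x s' else False.

Definition bst_merge (TA TB T : tree) (c : nat) : Prop :=
  exists (Pa Pb P : pred nat),
    [/\ is_bst T, perm_eq (inorder T) (inorder TA ++ inorder TB),
        is_top Pa TA /\ is_top Pb TB /\ is_top P T,
        (* tau = tau_a \cup tau_b as node sets *)
        {in inorder T, forall k,
            P k = ((k \in inorder TA) && Pa k) || ((k \in inorder TB) && Pb k)} /\
        (forall s, In_seq s (hanging P T) -> is_subtree_of s TA \/ is_subtree_of s TB) /\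
        boundaries_in P (inorder TA) (inorder T)
      & c = count P (inorder T)].

(* bst_mergesort s T a : some BST mergesort run on input sequence s returns T
   using a accesses (the run encodes all choices of splits and merges) *)
Inductive bst_mergesort : seq nat -> tree -> nat -> Prop :=
| ms_one x : bst_mergesort [:: x] (Node Leaf x Leaf) 0
| ms_split s1 s2 T1 T2 a1 a2 T a :
    s1 != [::] -> s2 != [::] ->
    bst_mergesort s1 T1 a1 -> bst_mergesort s2 T2 a2 ->
    bst_merge T1 T2 T a ->
    bst_mergesort (s1 ++ s2) T (a1 + a2 + a).

From mathcomp Require Import all_boot zify.
Set Implicit Arguments. Unset Strict Implicit. Unset Printing Implicit Defensive.

(* A BST mergesort run is simulated offline in the BST model.  By induction on
   the run, its output tree T serves its input sequence from T back to T, every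
   search starting and ending at the root, at cost at most 48 times the number
   of merge accesses.  For a merge of T1 and T2 into T with top tree tau, T is
   tau with unchanged subtrees of T1 and T2 hanging off it.  Rotations inside
   tau turn T into a tree whose upper part is the top tree of T1, with the other
   keys of tau as right spines in its gaps; since tau contains all block
   boundaries, each subtree of T1 below its top tree hangs there unchanged, so
   T1's run replays verbatim (subtrees grafted below leaves are never touched).
   Doing the same for T2 and rotating back to T costs 48 |tau| in all, because
   rearranging k keys among themselves costs at most 16 k: rotate to a right
   spine, then undo, at 3 operations per step, the rotations that take the
   target shape to that spine. *)

Lemma reach_cat st1 st2 st3 c1 c2 :
  reach st1 c1 st2 -> reach st2 c2 st3 -> reach st1 (c1 + c2) st3.
Proof. by elim=> // st st' c st'' Hs _ IH /IH; apply: reach_step Hs. Qed.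

Lemma reach1 st st' : step st st' -> reach st 1 st'.
Proof. by move=> Hs; apply: reach_step Hs (reach_refl _). Qed.

Lemma reach_map (f : tree * seq bool -> tree * seq bool) st c st' :
  (forall a b, step a b -> step (f a) (f b)) -> reach st c st' -> reach (f st) c (f st').
Proof.
move=> Hf; elim=> [a|a b k d Hs _ IH]; first exact: reach_refl.
exact: reach_step (Hf _ _ Hs) IH.
Qed.

Lemma subtree_nil t : subtree t [::] = t. Proof. by case: t. Qed.
Lemma replace_nil t s : replace t [::] s = s. Proof. by case: t. Qed.
Lemma subtree_Leaf p : subtree Leaf p = Leaf. Proof. by case: p. Qed.

Lemma subtree_cat t p q : subtree t (p ++ q) = subtree (subtree t p) q.
Proof.
elim: p t => [|b p IH] [|l k r] /=; rewrite ?subtree_nil //; by [apply: IH | case: {IH} q].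
Qed.

Lemma subtree_rcons_Leaf t q b : subtree t q = Leaf -> subtree t (rcons q b) = Leaf.
Proof. by rewrite -cats1 subtree_cat => ->. Qed.

Lemma subtree_replace t q s : subtree t q <> Leaf -> subtree (replace t q s) q = s.
Proof.
elim: q t => [|b q IH] [|l k r] //=; rewrite ?subtree_nil ?subtree_Leaf //.
by case: b => H /=; rewrite IH.
Qed.

Lemma replace_replace t q s s' : replace (replace t q s) q s' = replace t q s'.
Proof.
elim: q t => [|b q IH] [|l k r] /=; rewrite ?replace_nil //.
by case: b => /=; rewrite IH.
Qed.

Lemma replace_subtree t q : replace t q (subtree t q) = t.
Proof.
elim: q t => [|b q IH] [|l k r] //=; rewrite ?subtree_nil //.
by case: b => /=; rewrite IH.
Qed.

Lemma key_at_None t p : (key_at t p = None) <-> (subtree t p = Leaf).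
Proof. by rewrite /key_at; case: (subtree t p). Qed.

Definition valid_pos (st : tree * seq bool) : Prop := subtree st.1 st.2 <> Leaf.

Lemma rotate_Node b u s : rotate b u = Some s -> s <> Leaf.
Proof. by case: b; case: u => [|[|? ? ?] ? [|? ? ?]] //= [<-]. Qed.

Lemma rotateK b u s : rotate b u = Some s -> rotate (~~ b) s = Some u.
Proof. by case: b; case: u => [|[|? ? ?] ? [|? ? ?]] //= [<-]. Qed.

Lemma rotate_child b u s : rotate b u = Some s -> subtree s [:: ~~ b] <> Leaf.
Proof. by case: b; case: u => [|[|? ? ?] ? [|? ? ?]] //= [<-]. Qed.

Lemma step_valid st st' : step st st' -> valid_pos st -> valid_pos st'.
Proof.
case: st st' => t p [t' p']; rewrite /valid_pos /=.
case=> [[q [b [-> [-> ->]]]]|[[b [-> [-> H]]]|[q [b [s [-> [Hr [-> ->]]]]]]]] Hp.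
- by move/(subtree_rcons_Leaf b).
- by move/key_at_None.
- rewrite subtree_replace; first exact: rotate_Node Hr.
  by move/(subtree_rcons_Leaf b).
Qed.

(* A child move is undone by a parent move and vice versa; a rotation is undone
   by descending to the rotated-up child, rotating back, and re-descending. *)
Lemma step_undo st st' : step st st' -> valid_pos st -> exists2 c, c <= 3 & reach st' c st.
Proof.
case: st st' => t p [t' p'] /=.
case=> [[q [b [-> [-> ->]]]]|[[b [-> [-> H]]]|[q [b [s [-> [Hr [-> ->]]]]]]]] Hp.
- exists 1 => //; apply: reach1; right; left; exists b; split=> //; split=> //.
  by move/key_at_None.
- by exists 1 => //; apply: reach1; left; exists p, b.
- have Hq : subtree t q <> Leaf by move/(subtree_rcons_Leaf b).
  have Hs : subtree (replace t q s) q = s by rewrite subtree_replace.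
  exists 3 => //.
  apply: (@reach_step _ (replace t q s, rcons q (~~ b))).
    right; left; exists (~~ b); split=> //; split=> //.
    by move/key_at_None; rewrite -cats1 subtree_cat Hs; apply: rotate_child Hr.
  apply: (@reach_step _ (t, q)).
    right; right; exists q, (~~ b), (subtree t q); split=> //; split.
      by rewrite Hs; apply: rotateK.
    by rewrite replace_replace replace_subtree.
  apply: reach1; right; left; exists b; split=> //; split=> //.
  by move/key_at_None.
Qed.

Lemma reach_undo st c st' :
  reach st c st' -> valid_pos st -> exists2 c', c' <= 3 * c & reach st' c' st.
Proof.
elim=> [a|a b k d Hs _ IH] Hv; first by exists 0 => //; apply: reach_refl.
have [c1 Hc1 R1] := step_undo Hs Hv.
have [c2 Hc2 R2] := IH (step_valid Hs Hv).
exists (c2 + c1); [lia | exact: reach_cat R2 R1].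
Qed.

Lemma step_in_child (d : bool) l k r p r' p' :
  step (r, p) (r', p') ->
  step (if d then Node l k r else Node r k l, d :: p)
       (if d then Node l k r' else Node r' k l, d :: p').
Proof.
case=> [[q [b [-> [-> ->]]]]|[[b [-> [-> H]]]|[q [b [s [-> [Hr [-> ->]]]]]]]].
- by left; exists (d :: q), b; case: d.
- by right; left; exists b; case: d.
- by right; right; exists (d :: q), b, s; case: d.
Qed.

Lemma reach_in_child (d : bool) l k r p c r' p' :
  reach (r, p) c (r', p') ->
  reach (if d then Node l k r else Node r k l, d :: p) c
        (if d then Node l k r' else Node r' k l, d :: p').
Proof.
move=> R; pose f st := (if d then Node l k st.1 else Node st.1 k l, d :: st.2).
apply: (reach_map (f := f) _ R).
by move=> [? ?] [? ?]; apply: step_in_child.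
Qed.

(** * Rearranging a tree through its right spine *)

Fixpoint right_spine (s : seq nat) : tree :=
  if s is k :: s' then Node Leaf k (right_spine s') else Leaf.

Lemma inorder_right_spine s : inorder (right_spine s) = s.
Proof. by elim: s => //= k s ->. Qed.

Fixpoint left_weight (t : tree) : nat :=
  if t is Node l _ r then size (inorder l) + left_weight r else 0.

Lemma left_weight_le t : left_weight t <= size (inorder t).
Proof. by elim: t => //= l _ k r IHr; rewrite size_cat /=; lia. Qed.

(* A right rotation at the root lowers [left_weight] by one; when the root has
   no left child we recurse into the right subtree. *)
Lemma reach_right_spine u :
  exists2 c, c <= 4 * size (inorder u) & reach (u, [::]) c (right_spine (inorder u), [::]).
Proof.
suff [c Hc R] : exists2 c, c <= 2 * (size (inorder u) + left_weight u) &
    reach (u, [::]) c (right_spine (inorder u), [::]).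
  by exists c => //; have := left_weight_le u; lia.
have [N] := ubnP (size (inorder u) + left_weight u); elim: N u => // N IH.
case=> [_|[|a x c] k r /= HN]; first by exists 0 => //; apply: reach_refl.
- case: r HN => [|l' k' r'] HN; first by exists 0 => //; apply: reach_refl.
  set r := Node l' k' r' in HN *.
  have /IH [c1 Hc1 R1] : size (inorder r) + left_weight r < N by lia.
  exists (1 + c1 + 1); first lia.
  have down : step (Node Leaf k r, [::]) (Node Leaf k r, [:: true]).
    by right; left; exists true.
  have up : step (Node Leaf k (right_spine (inorder r)), [:: true])
                 (Node Leaf k (right_spine (inorder r)), [::]).
    by left; exists [::], true.
  exact: reach_cat (reach_cat (reach1 down) (reach_in_child true Leaf k R1)) (reach1 up).
- set u' := Node a x (Node c k r).
  have Hi : inorder u' = inorder (Node (Node a x c) k r) by rewrite /= -catA.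
  have /IH [c1 Hc1 R1] : size (inorder u') + left_weight u' < N.
    by move: HN; rewrite /= !size_cat /= size_cat /=; lia.
  exists (2 + c1); first by move: Hc1; rewrite Hi /u' /= !size_cat /=; lia.
  rewrite -[_ ++ _]Hi; apply: reach_cat R1.
  apply: (@reach_step _ (Node (Node a x c) k r, [:: false])).
    by right; left; exists false.
  by apply: reach1; right; right; exists [::], false, u'.
Qed.

Lemma reach_same_inorder u u' : inorder u = inorder u' ->
  exists2 c, c <= 16 * size (inorder u) & reach (u, [::]) c (u', [::]).
Proof.
case: u' => [|l k r] E.
  case: u E => [|l k r] E; first by exists 0 => //; apply: reach_refl.
  by move/(congr1 size): E; rewrite /= size_cat addnS.
have [c1 Hc1 R1] := reach_right_spine u.
have [c2 Hc2 R2] := reach_right_spine (Node l k r).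
have valid : valid_pos (Node l k r, [::]) by [].
have [c3 Hc3 R3] := reach_undo R2 valid.
exists (c1 + c3); last by apply: reach_cat R1 _; rewrite E.
by rewrite E in Hc1 *; lia.
Qed.

(** * Grafting trees below the leaves *)

(* [fill B t lo hi] replaces each leaf of [t], with key interval (x, y),
   by [B x y]; [None] stands for an infinite bound. *)
Fixpoint fill (B : option nat -> option nat -> tree) (t : tree) (lo hi : option nat) : tree :=
  if t is Node l k r then Node (fill B l lo (Some k)) k (fill B r (Some k) hi) else B lo hi.

Lemma subtree_fill B t p lo hi : subtree t p <> Leaf ->
  exists lo' hi', subtree (fill B t lo hi) p = fill B (subtree t p) lo' hi' /\
    forall s, replace (fill B t lo hi) p (fill B s lo' hi') = fill B (replace t p s) lo hi.
Proof.
elim: p t lo hi => [|b p IH] t lo hi.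
  by rewrite !subtree_nil => _; exists lo, hi; split=> // s; rewrite !replace_nil.
case: t => [|l k r] /=; first by move/(_ erefl).
case: b => H.
- have [lo' [hi' [H1 H2]]] := IH r (Some k) hi H.
  by exists lo', hi'; split=> // s; rewrite H2.
- have [lo' [hi' [H1 H2]]] := IH l lo (Some k) H.
  by exists lo', hi'; split=> // s; rewrite H2.
Qed.

Lemma key_at_fill B t p lo hi x :
  key_at t p = Some x -> key_at (fill B t lo hi) p = Some x.
Proof.
rewrite /key_at => Hx.
have [|lo' [hi' [-> _]]] := subtree_fill B lo hi (p := p) (t := t).
  by move=> E; rewrite E in Hx.
by case: (subtree t p) Hx.
Qed.

Lemma rotate_fill B b u s lo hi :
  rotate b u = Some s -> rotate b (fill B u lo hi) = Some (fill B s lo hi).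
Proof. by case: b; case: u => [|[|? ? ?] ? [|? ? ?]] //= [<-]. Qed.

Lemma step_fill B lo hi t p t' p' :
  step (t, p) (t', p') -> step (fill B t lo hi, p) (fill B t' lo hi, p').
Proof.
case=> [[q [b [-> [-> ->]]]]|[[b [-> [-> H]]]|[q [b [s [-> [Hr [-> ->]]]]]]]].
- by left; exists q, b.
- right; left; exists b; split=> //; split=> //.
  by case E: (key_at t (rcons p b)) H => [x|] // _; rewrite (key_at_fill B lo hi E).
- right; right.
  have [|lo' [hi' [H1 H2]]] := subtree_fill B lo hi (t := t) (p := q).
    by move=> E; rewrite E in Hr; case: b Hr.
  exists q, b, (fill B s lo' hi'); split=> //; rewrite H1 H2.
  by split=> //; apply: rotate_fill.
Qed.

Lemma reach_fill B lo hi t p c t' p' : reach (t, p) c (t', p') ->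
  reach (fill B t lo hi, p) c (fill B t' lo hi, p').
Proof.
move=> R; apply: (reach_map (f := fun st => (fill B st.1 lo hi, st.2)) _ R).
by move=> [? ?] [? ?]; apply: step_fill.
Qed.

Lemma reach_refill G u u' : inorder u = inorder u' ->
  exists2 c, c <= 16 * size (inorder u) &
    reach (fill G u None None, [::]) c (fill G u' None None, [::]).
Proof.
by move=> E; have [c Hc R] := reach_same_inorder E; exists c => //; apply: reach_fill R.
Qed.

Definition root_search (t : tree) (x : nat) (c : nat) (t' : tree) : Prop :=
  exists t1 p1 c1 c2,
    [/\ reach (t, [::]) c1 (t1, p1), key_at t1 p1 = Some x,
        reach (t1, p1) c2 (t', [::]) & c = c1 + c2].

Inductive run : tree -> seq nat -> nat -> tree -> Prop :=
| run_nil t c t' : reach (t, [::]) c (t', [::]) -> run t [::] c t'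
| run_cons t x xs c1 t1 c2 t2 :
    root_search t x c1 t1 -> run t1 xs c2 t2 -> run t (x :: xs) (c1 + c2) t2.

Lemma run_fill B lo hi t s c t' : run t s c t' -> run (fill B t lo hi) s c (fill B t' lo hi).
Proof.
elim=> [a k b R|a x xs c1 t1 c2 t2 [u [p [k1 [k2 [R1 Hk R2 ->]]]]] _ IH].
  exact/run_nil/reach_fill.
apply: run_cons IH; exists (fill B u lo hi), p, k1, k2.
by split=> //; [exact: reach_fill | exact: key_at_fill | exact: reach_fill].
Qed.

Lemma reach_run t0 t s c t' k :
  reach (t0, [::]) k (t, [::]) -> run t s c t' -> run t0 s (k + c) t'.
Proof.
move=> R H; case: H R => [a k' b R'|a x xs c1 t1 c2 t2 [u [p [k1 [k2 [R1 Hk R2 ->]]]]] Hr] R.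
  exact: run_nil (reach_cat R R').
rewrite addnA; apply: run_cons Hr.
by exists u, p, (k + k1), k2; rewrite addnA; split=> //; apply: reach_cat R R1.
Qed.

Lemma run_cat t s1 c1 t1 s2 c2 t2 :
  run t s1 c1 t1 -> run t1 s2 c2 t2 -> run t (s1 ++ s2) (c1 + c2) t2.
Proof.
elim=> [a k b R|a x xs k1 u k2 v Hs _ IH] H2 /=; first exact: reach_run R H2.
by rewrite -addnA; apply: run_cons Hs (IH H2).
Qed.

Lemma run_reach t s c t1 k t' :
  run t s c t1 -> reach (t1, [::]) k (t', [::]) -> run t s (c + k) t'.
Proof. by move=> H R; have := run_cat H (run_nil R); rewrite cats0. Qed.

Lemma run_serve t s c t' : run t s c t' -> exists2 c', c' <= c & serve t s c'.
Proof.
elim=> [a k b _|a x xs c1 t1 c2 t2 [u [p [k1 [k2 [R1 Hk R2 ->]]]]] _ [c' Hc' IH]].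
  by exists 0 => //; apply: serve_nil.
exists (k1 + k2 + c'); first by rewrite leq_add2l.
by apply: serve_cons IH; exists u, p, k1, [::], k2.
Qed.

Lemma mem_node z l k r :
  (z \in inorder (Node l k r)) = [|| z \in inorder l, z == k | z \in inorder r].
Proof. by rewrite /= mem_cat in_cons. Qed.

Lemma sorted_node l k r : sorted ltn (inorder (Node l k r)) ->
  [/\ all (ltn^~ k) (inorder l), all (ltn k) (inorder r),
      sorted ltn (inorder l) & sorted ltn (inorder r)].
Proof.
rewrite /= !(sorted_pairwise ltn_trans) pairwise_cat /= allrel_consr.
by case/and4P => /andP[a _] b c d; split.
Qed.

Lemma mem_subtree t p : {subset inorder (subtree t p) <= inorder t}.
Proof.
elim: p t => [|b p IH] [|l k r] //=; rewrite ?subtree_nil // => z /IH.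
by rewrite mem_node; case: b => ->; rewrite ?orbT.
Qed.

Lemma root_mem_subtree t p l v r : subtree t p = Node l v r -> v \in inorder t.
Proof. by move=> E; apply: (mem_subtree (p := p)); rewrite E mem_node eqxx orbT. Qed.

Lemma sorted_subtree t p : sorted ltn (inorder t) -> sorted ltn (inorder (subtree t p)).
Proof.
elim: p t => [|b p IH] [|l k r] //=; rewrite ?subtree_nil //.
by case/sorted_node => _ _ sl sr; case: b; apply: IH.
Qed.

Lemma size_subtree t p : size (inorder (subtree t p)) <= size (inorder t).
Proof.
elim: p t => [|b p IH] [|l k r] //=; rewrite ?subtree_nil // size_cat /=.
by case: b; [have := IH r | have := IH l]; lia.
Qed.

Lemma subtree_size_eq t p : size (inorder t) <= size (inorder (subtree t p)) -> subtree t p = t.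
Proof.
case: p t => [|b p] [|l k r] //=; rewrite ?subtree_nil // size_cat /=.
by case: b; [have := size_subtree r p | have := size_subtree l p]; lia.
Qed.

Lemma subtree_convex t p a b c : sorted ltn (inorder t) ->
  a \in inorder (subtree t p) -> c \in inorder (subtree t p) -> b \in inorder t ->
  a <= b -> b <= c -> b \in inorder (subtree t p).
Proof.
elim: p t => [|d p IH] [|l k r] //=; rewrite ?subtree_nil // => st.
have [Hl Hr sl sr] := sorted_node st.
case: d => Ha Hc; rewrite mem_node => Hb ab bc; apply: IH => //.
- have /= ka := allP Hr _ (mem_subtree Ha).
  by case/or3P: Hb => [/(allP Hl) /= ?|/eqP ?|] //; lia.
- have /= ck := allP Hl _ (mem_subtree Hc).
  by case/or3P: Hb => [|/eqP ?|/(allP Hr) /= ?] //; lia.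
Qed.

Lemma subtree_nest t p q l v r : sorted ltn (inorder t) ->
  subtree t p = Node l v r -> v \in inorder (subtree t q) ->
  exists p', subtree (subtree t q) p' = Node l v r.
Proof.
elim: q t p => [|b q IH] t p st Hp Hv; first by exists p; rewrite subtree_nil.
case: t st Hp Hv => [|l0 k r0] st; first by rewrite subtree_Leaf.
have [Hl Hr sl sr] := sorted_node st.
case: p => [|b' p] /= Hp Hv.
  case: Hp => _ ? _; subst k.
  by case: b Hv => /mem_subtree; [move/(allP Hr) | move/(allP Hl)]; rewrite /= ltnn.
have Hv' : v \in inorder (subtree (if b' then r0 else l0) p) by rewrite Hp mem_node eqxx orbT.
case: b b' Hv Hp Hv' => [] [] Hv Hp Hv'; try exact: IH Hp Hv.
- have /= := allP Hr _ (mem_subtree Hv); have /= := allP Hl _ (mem_subtree Hv'); lia.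
- have /= := allP Hl _ (mem_subtree Hv); have /= := allP Hr _ (mem_subtree Hv'); lia.
Qed.

Lemma subtree_eq_of_keys t p q l v r : sorted ltn (inorder t) ->
  subtree t p = Node l v r -> v \in inorder (subtree t q) ->
  {subset inorder (subtree t q) <= inorder (Node l v r)} ->
  subtree t q = Node l v r.
Proof.
move=> st Hp Hv sub_q.
have [p' Hp'] := subtree_nest st Hp Hv.
have uq : uniq (inorder (subtree t q)).
  by apply: sorted_uniq (sorted_subtree q st); [exact: ltn_trans | exact: ltnn].
rewrite -Hp'; symmetry; apply: subtree_size_eq; rewrite Hp'.
exact: uniq_leq_size uq sub_q.
Qed.

Definition above (lo : option nat) (k : nat) : bool := if lo is Some a then a < k else true.
Definition below (k : nat) (hi : option nat) : bool := if hi is Some b then k < b else true.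
Definition within (lo hi : option nat) (k : nat) : bool := above lo k && below k hi.

Lemma above_trans lo k z : k <= z -> above lo k -> above lo z.
Proof. by case: lo => //= a; lia. Qed.

Lemma below_trans hi k z : z <= k -> below k hi -> below z hi.
Proof. by case: hi => //= b; lia. Qed.

Lemma all_within_node l k r lo hi : sorted ltn (inorder (Node l k r)) ->
  all (within lo hi) (inorder (Node l k r)) ->
  [/\ all (within lo (Some k)) (inorder l), all (within (Some k) hi) (inorder r)
    & within lo hi k].
Proof.
case/sorted_node => Hl Hr _ _; rewrite /= all_cat /= => /and3P[al ik ar].
split=> //; apply/allP => z Hz.
- by have /= zk := allP Hl z Hz; rewrite /within /= zk andbT; case/andP: (allP al z Hz).
- by have /= kz := allP Hr z Hz; rewrite /within /= kz; case/andP: (allP ar z Hz).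
Qed.

Fixpoint range_subtree (X : tree) (lo hi : option nat) : tree :=
  if X is Node l k r then
    if ~~ above lo k then range_subtree r lo hi
    else if ~~ below k hi then range_subtree l lo hi
    else X
  else Leaf.

Lemma range_subtreeP X lo hi : sorted ltn (inorder X) ->
  (range_subtree X lo hi = Leaf /\ {in inorder X, forall k, ~~ within lo hi k}) \/
  (exists p l v r, [/\ subtree X p = Node l v r, range_subtree X lo hi = Node l v r,
      within lo hi v & {in inorder X, forall k, within lo hi k -> k \in inorder (Node l v r)}]).
Proof.
elim: X => [|l IHl k r IHr] /=; first by left.
case/sorted_node => Hl Hr sl sr.
case Elo: (above lo k) => /=; last first.
  have no_l z : z <= k -> ~~ within lo hi z.
    by move=> zk; rewrite /within (contraFF (above_trans zk) Elo).
  have no_lk z : z \in inorder l -> ~~ within lo hi z by move/(allP Hl)/ltnW/no_l.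
  case: (IHr sr) => [[-> H]|[p [l' [v [r' [H1 H2 H3 H4]]]]]].
    by left; split=> // z; rewrite mem_node => /or3P[/no_lk|/eqP->|/H] //; rewrite /within Elo.
  right; exists (true :: p), l', v, r'; split=> // z.
  by rewrite mem_node => /or3P[/no_lk/negPf->|/eqP->|/H4]; rewrite /within ?Elo.
case Ehi: (below k hi) => /=; last first.
  have no_r z : k <= z -> ~~ within lo hi z.
    by move=> kz; rewrite /within (contraFF (below_trans kz) Ehi) andbF.
  have no_rk z : z \in inorder r -> ~~ within lo hi z by move/(allP Hr)/ltnW/no_r.
  case: (IHl sl) => [[-> H]|[p [l' [v [r' [H1 H2 H3 H4]]]]]].
    left; split=> // z; rewrite mem_node => /or3P[/H|/eqP->|/no_rk] //.
    by rewrite /within Ehi andbF.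
  right; exists (false :: p), l', v, r'; split=> // z.
  by rewrite mem_node => /or3P[/H4|/eqP->|/no_rk/negPf->]; rewrite /within ?Ehi ?andbF.
by right; exists [::], l, k, r; split=> //; rewrite /within Elo Ehi.
Qed.

Lemma range_subtree_Leaf X lo hi : sorted ltn (inorder X) ->
  {in inorder X, forall k, ~~ within lo hi k} -> range_subtree X lo hi = Leaf.
Proof.
move=> sX H; case: (range_subtreeP lo hi sX) => [[]//|[p [l [v [r [Hp _ Hv _]]]]]].
by have := H v (root_mem_subtree Hp); rewrite Hv.
Qed.

(** * Top trees and their gaps *)

Lemma topc_none Q t : all (predC Q) (inorder t) -> topc Q t.
Proof.
elim: t => //= l IHl k r IHr; rewrite all_cat /= => /and3P[al nk ar].
by rewrite (negPf nk) al ar.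
Qed.

Lemma topc_subtree Q t p : topc Q t -> topc Q (subtree t p).
Proof.
elim: p t => [|b p IH] [|l k r] //=; rewrite ?subtree_nil //.
case: (Q k) => [/andP[tl tr]|Ha]; first by case: b; apply: IH.
apply/topc_none/allP => z /mem_subtree Hz; apply: (allP Ha).
by rewrite mem_node; case: b Hz => ->; rewrite ?orbT.
Qed.

Fixpoint top_cut (Q : pred nat) (t : tree) : tree :=
  if t is Node l k r then (if Q k then Node (top_cut Q l) k (top_cut Q r) else Leaf) else Leaf.

Lemma inorder_top_cut Q t : topc Q t -> inorder (top_cut Q t) = filter Q (inorder t).
Proof.
elim: t => //= l IHl k r IHr; case Qk: (Q k) => /=.
  by case/andP => /IHl -> /IHr ->; rewrite filter_cat /= Qk.
rewrite all_cat /= Qk /= => /andP[al ar].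
by rewrite filter_cat /= Qk !(eq_in_filter (a2 := pred0)) ?filter_pred0 // => z Hz;
  apply/negbTE; [apply: (allP ar) | apply: (allP al)].
Qed.

Lemma mem_top_cut Q t : {subset inorder (top_cut Q t) <= inorder t}.
Proof.
elim: t => //= l IHl k r IHr; case: (Q k) => //= z.
by rewrite !mem_cat !in_cons => /or3P[/IHl->|->|/IHr->]; rewrite ?orbT.
Qed.

Lemma sorted_top_cut Q t : sorted ltn (inorder t) -> sorted ltn (inorder (top_cut Q t)).
Proof.
elim: t => //= l IHl k r IHr /sorted_node[Hl Hr sl sr]; case: (Q k) => //=.
rewrite (sorted_pairwise ltn_trans) pairwise_cat /= allrel_consr.
rewrite -!(sorted_pairwise ltn_trans) IHl // IHr // andbT.
have al : all (ltn^~ k) (inorder (top_cut Q l)) by apply/allP => z /mem_top_cut /(allP Hl).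
have ar : all (ltn k) (inorder (top_cut Q r)) by apply/allP => z /mem_top_cut /(allP Hr).
rewrite al ar /= andbT; apply/allrelP => a b /(allP al) /= ? /(allP ar) /= ?; lia.
Qed.

Lemma In_seq_cat x s1 s2 : In_seq x (s1 ++ s2) <-> In_seq x s1 \/ In_seq x s2.
Proof. by elim: s1 => [|y s IH] /=; [split; [right|case] | rewrite IH; tauto]. Qed.

Lemma hanging_cover P t h : topc P t -> h \in inorder t -> ~~ P h ->
  exists2 R, In_seq R (hanging P t) & h \in inorder R.
Proof.
elim: t => //= l IHl k r IHr; case Pk: (P k) => /=; last first.
  by move=> _ Hh _; exists (Node l k r); [left|].
case/andP => tl tr; rewrite mem_cat in_cons => /or3P[hl|/eqP->|hr] nh.
- by have [R H1 H2] := IHl tl hl nh; exists R => //; apply/In_seq_cat; left.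
- by rewrite Pk in nh.
- by have [R H1 H2] := IHr tr hr nh; exists R => //; apply/In_seq_cat; right.
Qed.

Lemma hanging_none P t R : topc P t -> In_seq R (hanging P t) -> all (predC P) (inorder R).
Proof.
elim: t => //= l IHl k r IHr; case Pk: (P k) => /=; last by move=> Ha [<-|].
by case/andP => tl tr /In_seq_cat [/(IHl tl)|/(IHr tr)].
Qed.

Lemma hanging_subtree P t R : In_seq R (hanging P t) -> is_subtree_of R t.
Proof.
elim: t => //= l IHl k r IHr; case: (P k) => /=; last by move=> [<-|//]; exists [::].
by case/In_seq_cat => [/IHl [p Hp]|/IHr [p Hp]]; [exists (false :: p) | exists (true :: p)].
Qed.

Fixpoint leaf_interval (u : tree) (lo hi x y : option nat) : Prop :=
  if u is Node l k r then leaf_interval l lo (Some k) x y \/ leaf_interval r (Some k) hi x y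
  else x = lo /\ y = hi.

Lemma eq_fill G G' u lo hi : (forall x y, leaf_interval u lo hi x y -> G x y = G' x y) ->
  fill G u lo hi = fill G' u lo hi.
Proof.
elim: u lo hi => [|l IHl k r IHr] lo hi /= H; first exact: H.
by rewrite IHl ?IHr // => x y Hg; apply: H; [right|left].
Qed.

Lemma fill_fill B G u lo hi :
  fill B (fill G u lo hi) lo hi = fill (fun x y => fill B (G x y) x y) u lo hi.
Proof. by elim: u lo hi => //= l IHl k r IHr lo hi; rewrite IHl IHr. Qed.

Lemma fill_Leaf t lo hi : fill (fun _ _ => Leaf) t lo hi = t.
Proof. by elim: t lo hi => //= l IHl k r IHr lo hi; rewrite IHl IHr. Qed.

Lemma leaf_interval_bounds u lo hi x y : leaf_interval u lo hi x y ->
  (x = lo \/ exists2 x0, x = Some x0 & x0 \in inorder u) /\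
  (y = hi \/ exists2 y0, y = Some y0 & y0 \in inorder u).
Proof.
elim: u lo hi => [|l IHl k r IHr] lo hi /=; first by case=> -> ->; split; left.
case=> [/IHl|/IHr] [[->|[x0 -> Hx]] [->|[y0 -> Hy]]]; split;
  by [left | right; eexists; [reflexivity | rewrite mem_node ?Hx ?Hy ?eqxx ?orbT]].
Qed.

Lemma leaf_interval_within u lo hi x y : sorted ltn (inorder u) ->
  all (within lo hi) (inorder u) -> leaf_interval u lo hi x y ->
  (forall k, within x y k -> within lo hi k) /\ {in inorder u, forall k, ~~ within x y k}.
Proof.
elim: u lo hi => [|l IHl k r IHr] lo hi su au /=; first by case=> -> ->; split.
have [al ar /andP[k_lo k_hi]] := all_within_node su au.
have [Hl Hr sl sr] := sorted_node su.
case=> [/(IHl _ _ sl al) [H1 H2]|/(IHr _ _ sr ar) [H1 H2]]; split.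
- move=> z /H1 /andP[lz /= zk]; rewrite /within lz /=; exact: below_trans (ltnW zk) k_hi.
- move=> z; rewrite mem_node => /or3P[/H2 //|/eqP->|/(allP Hr) /= kz];
  by apply/negP => /H1 /andP[_ /=]; rewrite ?ltnn // ltnNge ltnW.
- move=> z /H1 /andP[/= kz rz]; rewrite /within rz andbT; exact: above_trans (ltnW kz) k_lo.
- move=> z; rewrite mem_node => /or3P[/(allP Hl) /= zk|/eqP->|/H2 //];
  by apply/negP => /H1 /andP[/=]; rewrite ?ltnn // ltnNge ltnW.
Qed.

Lemma fill_range_top_cut Q X lo hi : sorted ltn (inorder X) -> all (within lo hi) (inorder X) ->
  X = fill (range_subtree X) (top_cut Q X) lo hi.
Proof.
elim: X lo hi => [|l IHl k r IHr] lo hi //= sX aX.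
have [al ar /andP[k_lo k_hi]] := all_within_node sX aX.
have [Hl Hr sl sr] := sorted_node sX.
case: (Q k) => /=; last by rewrite k_lo k_hi.
congr Node.
- rewrite {1}(IHl lo (Some k) sl al); apply: eq_fill => x y /leaf_interval_bounds [Hx Hy] /=.
  have -> : above x k by case: Hx => [->|[x0 -> /mem_top_cut /(allP Hl)]].
  suff -> : below k y = false by [].
  by case: Hy => [->|[y0 -> /mem_top_cut /(allP Hl) /= y0k]]; rewrite /= ?ltnn // ltnNge ltnW.
- rewrite {1}(IHr (Some k) hi sr ar); apply: eq_fill => x y /leaf_interval_bounds [Hx Hy] /=.
  suff -> : above x k = false by [].
  by case: Hx => [->|[x0 -> /mem_top_cut /(allP Hr) /= kx0]]; rewrite /= ?ltnn // ltnNge ltnW.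
Qed.

Lemma filter_nil_in (a : pred nat) s : {in s, forall z, ~~ a z} -> filter a s = [::].
Proof. by move=> H; apply/eqP; rewrite -[_ == _]negbK -has_filter; apply/hasPn. Qed.

Lemma filter_within_split (s : seq nat) (Q : pred nat) lo hi k :
  sorted ltn s -> k \in s -> Q k -> within lo hi k ->
  [seq z <- s | Q z && within lo (Some k) z] ++ k :: [seq z <- s | Q z && within (Some k) hi z] =
  [seq z <- s | Q z && within lo hi z].
Proof.
move=> + Hk; case/splitPr: Hk => s1 s2 + Qk /andP[k_lo k_hi].
rewrite (sorted_pairwise ltn_trans) pairwise_cat /= allrel_consr => /and4P[/andP[a1 _] _ a2 _].
rewrite !filter_cat /= Qk /within /= ltnn andbF k_lo k_hi /=.
have -> : [seq z <- s1 | Q z && ((k < z) && below z hi)] = [::].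
  by apply: filter_nil_in => z /(allP a1) /= zk; rewrite ltnNge ltnW ?andbF.
have -> : [seq z <- s2 | Q z && (above lo z && (z < k))] = [::].
  by apply: filter_nil_in => z /(allP a2) /= kz; rewrite ltnNge ltnW ?andbF.
rewrite cats0 /=; congr (_ ++ _ :: _); apply: eq_in_filter => z.
- by move/(allP a1) => /= zk; rewrite zk (below_trans (ltnW zk) k_hi).
- by move/(allP a2) => /= kz; rewrite kz (above_trans (ltnW kz) k_lo).
Qed.

Definition spine_filler (s : seq nat) (Q : pred nat) (x y : option nat) : tree :=
  right_spine [seq z <- s | Q z && within x y z].

Lemma inorder_fill_spine s Q u lo hi : sorted ltn s -> sorted ltn (inorder u) ->
  all (within lo hi) (inorder u) -> {subset inorder u <= [seq z <- s | Q z]} ->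
  inorder (fill (spine_filler s Q) u lo hi) = [seq z <- s | Q z && within lo hi z].
Proof.
move=> ss; elim: u lo hi => [|l IHl k r IHr] lo hi /=; first by rewrite inorder_right_spine.
move=> su au us; have [al ar ik] := all_within_node su au.
have [_ _ sl sr] := sorted_node su.
have /us : k \in inorder (Node l k r) by rewrite mem_node eqxx orbT.
rewrite mem_filter => /andP[Qk ks].
rewrite IHl ?IHr ?filter_within_split // => z zu; apply: us; by rewrite mem_node zu ?orbT.
Qed.

Definition key_bound (X : tree) (Q : pred nat) (b : option nat) : Prop :=
  forall b0, b = Some b0 -> (b0 \in inorder X) && Q b0.

(* By convexity of subtrees: a subtree avoiding [Q] cannot straddle a [Q]-key. *)
Lemma subtree_within X (Q : pred nat) p x y v : sorted ltn (inorder X) ->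
  all (predC Q) (inorder (subtree X p)) -> v \in inorder (subtree X p) -> within x y v ->
  key_bound X Q x -> key_bound X Q y -> {in inorder (subtree X p), forall z, within x y z}.
Proof.
move=> sX aS Hv /andP[vx vy] Hx Hy z Hz; apply/andP; split.
- case Ex: x vx => [x0|] //= x0v; rewrite ltnNge; apply/negP => zx.
  have /andP[x0X Qx0] := Hx x0 Ex.
  by have /(allP aS) /= := subtree_convex sX Hz Hv x0X zx (ltnW x0v); rewrite Qx0.
- case Ey: y vy => [y0|] //= vy0; rewrite ltnNge; apply/negP => yz.
  have /andP[y0X Qy0] := Hy y0 Ey.
  by have /(allP aS) /= := subtree_convex sX Hv Hz y0X (ltnW vy0) yz; rewrite Qy0.
Qed.

Lemma leaf_interval_top_cut Q X x y : sorted ltn (inorder X) -> topc Q X ->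
  leaf_interval (top_cut Q X) None None x y ->
  [/\ key_bound X Q x, key_bound X Q y & {in inorder X, forall z, within x y z -> ~~ Q z}].
Proof.
move=> sX tX gap; have iX := inorder_top_cut tX.
have [Hx Hy] := leaf_interval_bounds gap.
have all_within : all (within None None) (inorder (top_cut Q X)) by apply/allP.
have [_ Hno] := leaf_interval_within (sorted_top_cut Q sX) all_within gap.
split.
- by move=> x0 Ex; case: Hx => [|[x1]]; rewrite Ex // => -[<-]; rewrite iX mem_filter andbC.
- by move=> y0 Ey; case: Hy => [|[y1]]; rewrite Ey // => -[<-]; rewrite iX mem_filter andbC.
- move=> z zX zi; apply/negP => Qz.
  by have := Hno z; rewrite iX mem_filter Qz zX zi => /(_ isT).
Qed.

(** * Block boundaries *)

Lemma all_zip_behead_sorted (T : Type) (e : rel T) s :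
  all (fun xy => e xy.1 xy.2) (zip s (behead s)) = sorted e s.
Proof. by case: s => //= x s; elim: s x => //= y s IH x; rewrite IH. Qed.

Definition changes_at (T : Type) (f : T -> bool) (P : pred T) : rel T :=
  fun a b => (f a != f b) ==> P a && P b.

Lemma sorted_change_witness (T : eqType) (r : rel T) (f : T -> bool) (P : pred T) s w z :
  irreflexive r -> transitive r -> sorted r s -> sorted (changes_at f P) s ->
  w \in s -> z \in s -> r w z -> f w != f z ->
  exists2 l, l \in s & [&& P l, f l == f w, (l == w) || r w l & r l z].
Proof.
move=> r_irr r_tr; elim: s w => [|a s IH] //= w sS cS.
have aS := order_path_min r_tr sS; have ss := path_sorted sS; have cs := path_sorted cS.
rewrite !in_cons => Hw Hz wz fwz.
have zs : z \in s.
  case/orP: Hz => [/eqP za|//]; subst z.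
  case/orP: Hw => [/eqP wa|ws]; first by rewrite wa eqxx in fwz.
  by have := r_tr _ _ _ wz (allP aS w ws); rewrite r_irr.
case/orP: Hw => [/eqP wa|ws]; last first.
  by have [l Hl H] := IH w ss cs ws zs wz fwz; exists l => //; rewrite in_cons Hl orbT.
subst w.
case: s IH sS cS aS ss cs zs {Hz} => // b s IH _ /andP[cab _] aS ss cs zs.
have [fab|/negbNE/eqP fab] := boolP (f a != f b).
  by have /andP[Pa _] := implyP cab fab; exists a; rewrite ?mem_head ?Pa ?eqxx.
have bz : r b z.
  move: zs; rewrite in_cons => /orP[/eqP zb|]; first by rewrite zb fab eqxx in fwz.
  exact/allP/(order_path_min r_tr ss).
have fbz : f b != f z by rewrite -fab.
have [l Hl /and4P[Pl fl lb lz]] := IH b ss cs (mem_head _ _) zs bz fbz.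
exists l; first by rewrite in_cons Hl orbT.
have rab : r a b by apply: (allP aS); rewrite mem_head.
rewrite Pl fab fl lz andbT; apply/orP; right.
by case/orP: lb => [/eqP->|/(r_tr _ _ _ rab)].
Qed.

Lemma change_witness_within (f : nat -> bool) (P : pred nat) s w z x y :
  sorted ltn s -> sorted (changes_at f P) s -> w \in s -> z \in s -> f w != f z ->
  within x y w -> within x y z -> exists2 l, l \in s & [&& P l, f l == f w & within x y l].
Proof.
move=> sS cS ws zs fwz /andP[wx wy] /andP[zx zy].
case: (ltngtP w z) => [wz|zw|wz]; last by rewrite wz eqxx in fwz.
- have [l ls /and4P[Pl fl lw lz]] := sorted_change_witness ltnn ltn_trans sS cS ws zs wz fwz.
  exists l => //; rewrite Pl fl /within (below_trans (ltnW lz) zy) andbT.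
  by apply: above_trans wx; case/orP: lw => [/eqP->|/ltnW].
- have rsS : sorted (fun a b => b < a) (rev s) by rewrite rev_sorted.
  have rcS : sorted (changes_at f P) (rev s).
    by rewrite rev_sorted; apply: sub_sorted cS => a b; rewrite /changes_at eq_sym andbC.
  have wr : w \in rev s by rewrite mem_rev.
  have zr : z \in rev s by rewrite mem_rev.
  have [l + /and4P[Pl fl lw lz]] := sorted_change_witness (fun a => ltnn a)
    (fun a b c ba cb => ltn_trans cb ba) rsS rcS wr zr zw fwz.
  rewrite mem_rev => ls; exists l => //; rewrite Pl fl /within (above_trans (ltnW lz) zx) /=.
  by apply: below_trans wy; case/orP: lw => [/eqP->|/ltnW].
Qed.

(** * Merging *)

Definition embeds_top (T X : tree) (P : pred nat) : Prop :=
  exists B u, fill B X None None = fill (range_subtree T) u None None /\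
              inorder u = filter P (inorder T).

Section TopEmbedding.

Variables (T TX TY : tree) (P PX : pred nat).
Hypotheses (sT : sorted ltn (inorder T)) (sX : sorted ltn (inorder TX)).
Hypothesis memT : forall k, (k \in inorder T) = (k \in inorder TX) || (k \in inorder TY).
Hypothesis disjXY : forall k, k \in inorder TX -> k \notin inorder TY.
Hypotheses (topT : topc P T) (topX : topc PX TX).
Hypothesis P_PX : {in inorder TX, P =1 PX}.
Hypothesis hangT : forall R, In_seq R (hanging P T) -> is_subtree_of R TX \/ is_subtree_of R TY.
Hypothesis blocks : forall x y w z, w \in inorder TX -> z \in inorder TY ->
  within x y w -> within x y z -> exists2 l, l \in inorder TX & P l && within x y l.

Section Gap.

Variables (x y : option nat) (p : seq bool) (l : tree) (v : nat) (r : tree).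
Hypothesis gap : leaf_interval (top_cut PX TX) None None x y.
Hypotheses (Hp : subtree TX p = Node l v r) (Hv : within x y v).
Hypothesis gapX : {in inorder TX, forall k, within x y k -> k \in inorder (Node l v r)}.

Lemma gap_keys : {in inorder T, forall z, within x y z -> (z \in inorder (Node l v r)) && ~~ P z}.
Proof.
have [_ _ noPX] := leaf_interval_top_cut sX topX gap.
have vX := root_mem_subtree Hp.
suff zH z : z \in inorder T -> within x y z -> z \in inorder (Node l v r).
  move=> z zT zi; have zX : z \in inorder TX by apply: (mem_subtree (p := p)); rewrite Hp zH.
  by rewrite zH // P_PX // noPX.
rewrite memT => /orP[zX zi|zY zi]; first exact: gapX.
have [l0 l0X /andP[Pl0 l0i]] := blocks vX zY Hv zi.
by have := noPX l0 l0X l0i; rewrite -P_PX // Pl0.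
Qed.

Lemma gap_subtree_within : {in inorder (Node l v r), forall z, within x y z}.
Proof.
have [bound_x bound_y noPX] := leaf_interval_top_cut sX topX gap.
have nPv : ~~ PX v by apply: noPX (root_mem_subtree Hp) Hv.
have aH : all (predC PX) (inorder (subtree TX p)).
  by have := topc_subtree p topX; rewrite Hp /= (negPf nPv).
have vH : v \in inorder (subtree TX p) by rewrite Hp mem_node eqxx orbT.
by rewrite -Hp; apply: (subtree_within sX aH vH Hv bound_x bound_y).
Qed.

Lemma gap_subtree_of_T : exists q, subtree T q = Node l v r.
Proof.
have vT : v \in inorder T by rewrite memT (root_mem_subtree Hp).
have [R hR vR] := hanging_cover topT vT (proj2 (andP (gap_keys vT Hv))).
have [q Rq] := hanging_subtree hR.
case: (hangT hR) => [[q' Rq']|[q' Rq']]; last first.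
  by move: vR; rewrite -Rq' => /mem_subtree vY; have := disjXY (root_mem_subtree Hp); rewrite vY.
have [bound_x bound_y _] := leaf_interval_top_cut sX topX gap.
have aR : all (predC PX) (inorder (subtree TX q')).
  apply/allP => z zR; rewrite /= -P_PX ?(mem_subtree zR) //.
  by rewrite Rq' in zR; apply: (allP (hanging_none topT hR)).
have vR' : v \in inorder (subtree TX q') by rewrite Rq'.
exists q; rewrite Rq -Rq'; apply: (subtree_eq_of_keys sX Hp vR') => z zR.
exact: gapX (mem_subtree zR) (subtree_within sX aR vR' Hv bound_x bound_y zR).
Qed.

Lemma gap_range_subtree : range_subtree T x y = Node l v r.
Proof.
have [q Hq] := gap_subtree_of_T.
case: (range_subtreeP x y sT) => [[_ /(_ v)]|[p2 [l2 [v2 [r2 [Hp2 -> Hv2 gapT]]]]]].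
  by rewrite memT (root_mem_subtree Hp) Hv => /(_ isT).
have v2q : v2 \in inorder (subtree T q).
  by rewrite Hq; case/andP: (gap_keys (root_mem_subtree Hp2) Hv2).
rewrite -Hq; symmetry; apply: (subtree_eq_of_keys sT Hp2 v2q) => z zq.
apply: gapT (mem_subtree zq) _; rewrite Hq in zq.
exact: gap_subtree_within.
Qed.

End Gap.

Let B (a b : option nat) : tree := fill (range_subtree T) (spine_filler (inorder T) P a b) a b.

Lemma gap_fill x y : leaf_interval (top_cut PX TX) None None x y ->
  fill B (range_subtree TX x y) x y = B x y.
Proof.
move=> gap; case: (range_subtreeP x y sX) => [[-> _]//|[p [l [v [r [Hp -> Hv gapX]]]]]].
have keys := gap_keys gap Hp Hv gapX.
have spine0 a b : (forall z, within a b z -> within x y z) ->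
    spine_filler (inorder T) P a b = Leaf.
  move=> sub_ab; rewrite /spine_filler filter_nil_in // => z zT.
  by apply/nandP; case: (boolP (within a b z)) => [/sub_ab /(keys _ zT) /andP[_ ->]|]; [left|right].
have Bxy : B x y = Node l v r by rewrite /B spine0 //= (gap_range_subtree gap Hp Hv gapX).
rewrite Bxy -[RHS](fill_Leaf _ x y); apply: eq_fill => a b gab.
have sH : sorted ltn (inorder (Node l v r)) by rewrite -Hp; apply: sorted_subtree.
have aH : all (within x y) (inorder (Node l v r)).
  by apply/allP; apply: (gap_subtree_within gap Hp Hv).
have [sub_ab no_ab] := leaf_interval_within sH aH gab.
rewrite /B spine0 //=; apply: (range_subtree_Leaf sT) => z zT; apply/negP => zab.
by have /andP[zH _] := keys _ zT (sub_ab z zab); have := no_ab z zH; rewrite zab.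
Qed.

Lemma top_embedding : embeds_top T TX P.
Proof.
exists B, (fill (spine_filler (inorder T) P) (top_cut PX TX) None None); split.
  rewrite fill_fill {1}(fill_range_top_cut PX (lo := None) (hi := None) sX) ?fill_fill;
    last by apply/allP.
  by apply: eq_fill => x y /gap_fill.
rewrite inorder_fill_spine //; first by apply: eq_filter => z; rewrite andbT.
- exact: sorted_top_cut.
- by apply/allP.
- move=> z; rewrite (inorder_top_cut topX) !mem_filter => /andP[PXz zX].
  by rewrite memT zX P_PX ?PXz.
Qed.

End TopEmbedding.

Section Blocks.

Variables (s X Y : seq nat) (P : pred nat).
Hypothesis memS : forall k, (k \in s) = (k \in X) || (k \in Y).
Hypothesis disjXY : forall k, k \in X -> k \notin Y.

Lemma changes_at_swap :
  sorted (changes_at (fun k => k \in X) P) s -> sorted (changes_at (fun k => k \in Y) P) s.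
Proof.
have memY k : k \in s -> (k \in Y) = ~~ (k \in X).
  rewrite memS => /orP[kX|kY]; first by rewrite kX (negPf (disjXY kX)).
  by rewrite kY; apply/esym/negP => /disjXY; rewrite kY.
apply: (sub_in_sorted (P := mem s)); last by apply/allP.
by move=> a b aS bS; rewrite /changes_at !memY // (inj_eq negb_inj).
Qed.

Lemma change_block : sorted ltn s -> sorted (changes_at (fun k => k \in X) P) s ->
  forall x y w z, w \in X -> z \in Y -> within x y w -> within x y z ->
  exists2 l, l \in X & P l && within x y l.
Proof.
move=> sS cS x y w z wX zY wi zi.
have ws : w \in s by rewrite memS wX.
have zs : z \in s by rewrite memS zY orbT.
have fwz : (w \in X) != (z \in X) by rewrite wX; apply/negP => /eqP/esym/disjXY; rewrite zY.
have [l _ /and3P[Pl /eqP fl li]] := change_witness_within sS cS ws zs fwz wi zi.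
by exists l; rewrite ?fl ?Pl.
Qed.

End Blocks.

Lemma bst_merge_embeds T1 T2 T a : is_bst T1 -> is_bst T2 -> bst_merge T1 T2 T a ->
  exists P, [/\ a = count P (inorder T), T = fill (range_subtree T) (top_cut P T) None None,
    inorder (top_cut P T) = filter P (inorder T), embeds_top T T1 P & embeds_top T T2 P].
Proof.
move=> sA sB [PA [PB [P [sT permT [topA [topB topT]] [Prel [hang bnd]] ->]]]].
have memT k : (k \in inorder T) = (k \in inorder T1) || (k \in inorder T2).
  by rewrite (perm_mem permT) mem_cat.
have memT' k : (k \in inorder T) = (k \in inorder T2) || (k \in inorder T1).
  by rewrite memT orbC.
have disjAB k : k \in inorder T1 -> k \notin inorder T2.
  have := sorted_uniq ltn_trans ltnn sT; rewrite (perm_uniq permT) cat_uniq.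
  by case/and3P=> _ /hasPn D _ kA; apply/negP => /D; rewrite kA.
have disjBA k : k \in inorder T2 -> k \notin inorder T1.
  by move=> kB; apply/negP => /disjAB; rewrite kB.
have P_PA : {in inorder T1, P =1 PA}.
  by move=> k kA; rewrite Prel ?memT ?kA //= (negPf (disjAB k kA)) orbF.
have P_PB : {in inorder T2, P =1 PB}.
  by move=> k kB; rewrite Prel ?memT ?kB ?orbT //= (negPf (disjBA k kB)).
have hang' R : In_seq R (hanging P T) -> is_subtree_of R T2 \/ is_subtree_of R T1.
  by case/hang; [right | left].
have cS : sorted (changes_at (fun k => k \in inorder T1) P) (inorder T).
  by rewrite -all_zip_behead_sorted; case/andP: bnd.
case/andP: topT => _ topT; case/andP: topA => _ topA; case/andP: topB => _ topB.
exists P; split=> //.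
- by apply: fill_range_top_cut sT _; apply/allP.
- exact: inorder_top_cut.
- exact: top_embedding sT sA memT disjAB topT topA P_PA hang (change_block memT disjAB sT cS).
- exact: top_embedding sT sB memT' disjBA topT topB P_PB hang'
    (change_block memT' disjBA sT (changes_at_swap memT disjAB cS)).
Qed.

Lemma bst_merge_run T1 T2 T a s1 s2 c1 c2 :
  is_bst T1 -> is_bst T2 -> bst_merge T1 T2 T a ->
  run T1 s1 c1 T1 -> run T2 s2 c2 T2 ->
  exists2 c, c <= c1 + c2 + 48 * a & run T (s1 ++ s2) c T.
Proof.
move=> sA sB Hm runA runB.
have [P [-> D IC [B1 [u1 [E1 I1]]] [B2 [u2 [E2 I2]]]]] := bst_merge_embeds sA sB Hm.
have [k1 Hk1 R1] := reach_refill (range_subtree T) (etrans IC (esym I1)).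
have [k2 Hk2 R2] := reach_refill (range_subtree T) (etrans I1 (esym I2)).
have [k3 Hk3 R3] := reach_refill (range_subtree T) (etrans I2 (esym IC)).
rewrite IC size_filter in Hk1; rewrite I1 size_filter in Hk2; rewrite I2 size_filter in Hk3.
rewrite -D in R1 R3.
have runA' := run_fill B1 None None runA; rewrite E1 in runA'.
have runB' := run_fill B2 None None runB; rewrite E2 in runB'.
exists (k1 + (c1 + k2 + (c2 + k3))); first by clear -Hk1 Hk2 Hk3; lia.
exact: reach_run R1 (run_cat (run_reach runA' R2) (run_reach runB' R3)).
Qed.

Lemma bst_mergesort_run s T a : bst_mergesort s T a ->
  [/\ is_bst T, perm_eq (inorder T) s & exists2 c, c <= 48 * a & run T s c T].
Proof.
elim=> [x|s1 s2 T1 T2 a1 a2 T0 a0 _ _ _ [sA pA [c1 Hc1 runA]] _ [sB pB [c2 Hc2 runB]] Hm].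
  split=> //; exists 0 => //; rewrite -[0]/(0 + 0).
  apply: run_cons (run_nil (reach_refl _)).
  by exists (Node Leaf x Leaf), [::], 0, 0; split=> //; apply: reach_refl.
have [c Hc R] := bst_merge_run sA sB Hm runA runB.
case: Hm => [_ [_ [_ [sT permT _ _ _]]]].
split=> //; first exact: perm_trans permT (perm_cat pA pB).
by exists c => //; lia.
Qed.

Theorem theorem4 :
  exists C : nat, forall (n : nat) (pi : seq nat) (T : tree) (a : nat),
    perm_eq pi (iota 1 n) -> bst_mergesort pi T a -> OPT_BST_le n pi (C * a).
Proof.
exists 48 => n pi T a Hpi /bst_mergesort_run [sT pT [c Hc R]].
have [c' Hc' S] := run_serve R.
exists T, c'; split; last by split=> //; apply: leq_trans Hc' Hc.
apply: (irr_sorted_eq ltn_trans ltnn) => //; first exact: iota_ltn_sorted.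
by move=> z; rewrite (perm_mem pT) (perm_mem Hpi).
Qed.
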